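(* Let $f:G\to H$ be an epimorphism of finitely generated groups. Then the induced epimorphism $f_{RF}:RF(G)\to RF(H)$ is an isomorphism if and only if the induced epimorphism $f_{na}:RF_{na}(G)\to RF_{na}(H)$ is an isomorphism and $b_1(G)=b_1(H)$.
   Context: $\mathbb F$ denotes a non-abelian free group. $RF(G)$ is the quotient of $G$ by the intersection of the kernels of all homomorphisms $G\to\mathbb F$; $RF_{na}(G)$ is the quotient of $G$ by the intersection of the kernels of all homomorphisms $G\to\mathbb F$ with non-abelian image. An epimorphism $f:G\to H$ induces epimorphisms $RF(G)\to RF(H)$ and $RF_{na}(G)\to RF_{na}(H)$. $b_1(G)$ is the torsion-free rank of $H_1(G,\mathbb Z)$. *)

From Stdlib Require Import ZArith List.
Import ListNotations.
Set Implicit Arguments.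

Record group := Group {
  carrier :> Type;
  gmul : carrier -> carrier -> carrier;
  gone : carrier;
  ginv : carrier -> carrier;
  gmulA : forall x y z, gmul x (gmul y z) = gmul (gmul x y) z;
  gmul1l : forall x, gmul gone x = x;
  gmul1r : forall x, gmul x gone = x;
  gmulVl : forall x, gmul (ginv x) x = gone;
  gmulVr : forall x, gmul x (ginv x) = gone
}.
Arguments gmul {g}.
Arguments gone {g}.
Arguments ginv {g}.

Definition is_hom {G H : group} (f : G -> H) : Prop :=
  forall x y : G, f (gmul x y) = gmul (f x) (f y).

Definition surjective {G H : group} (f : G -> H) : Prop :=
  forall h : H, exists g : G, f g = h.

Definition is_epi {G H : group} (f : G -> H) : Prop := is_hom f /\ surjective f.

Inductive generated {G : group} (S : list G) : G -> Prop :=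
| gen_mem : forall x, In x S -> generated S x
| gen_one : generated S gone
| gen_mul : forall x y, generated S x -> generated S y -> generated S (gmul x y)
| gen_inv : forall x, generated S x -> generated S (ginv x).

Definition fin_gen (G : group) : Prop :=
  exists S : list G, forall x : G, generated S x.

Definition free_on {F : group} {X : Type} (b : X -> F) : Prop :=
  forall (K : group) (k : X -> K),
    exists phi : F -> K, is_hom phi /\ (forall x, phi (b x) = k x) /\
      (forall psi : F -> K, is_hom psi -> (forall x, psi (b x) = k x) ->
         forall y, psi y = phi y).

Definition nonabelian_free (F : group) : Prop :=
  (exists (X : Type) (b : X -> F), free_on b) /\
  (exists x y : F, gmul x y <> gmul y x).

(** RF(G) = G / N where N = intersection of kernels of all
    homomorphisms G -> F; two elements are identified in RF(G) iff every such
    homomorphism agrees on them.  Likewise for RF_na with homomorphisms of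
    non-abelian image. *)
Definition nonabelian_image {G F : group} (phi : G -> F) : Prop :=
  exists x y : G, gmul (phi x) (phi y) <> gmul (phi y) (phi x).

Definition RF_rel (F G : group) (x y : G) : Prop :=
  forall phi : G -> F, is_hom phi -> phi x = phi y.

Definition RFna_rel (F G : group) (x y : G) : Prop :=
  forall phi : G -> F, is_hom phi -> nonabelian_image phi -> phi x = phi y.

(** The map induced by f : G -> H on quotients G/~G -> H/~H (sending the class
    of g to the class of f g) is a bijection of the quotients, i.e. (being a
    homomorphism of quotient groups) an isomorphism. *)
Definition induced_bij {G H : group} (RG : G -> G -> Prop) (RH : H -> H -> Prop)
  (f : G -> H) : Prop :=
  (forall x y : G, RH (f x) (f y) -> RG x y) /\
  (forall h : H, exists g : G, RH (f g) h).

Definition fRF_iso (F : group) {G H : group} (f : G -> H) : Prop :=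
  induced_bij (@RF_rel F G) (@RF_rel F H) f.

Definition fna_iso (F : group) {G H : group} (f : G -> H) : Prop :=
  induced_bij (@RFna_rel F G) (@RFna_rel F H) f.

(** First Betti number: torsion-free rank of H_1(G,Z) = G/[G,G]. *)
Inductive comm_sub {G : group} : G -> Prop :=
| cs_comm : forall x y : G,
    comm_sub (gmul (gmul (ginv x) (ginv y)) (gmul x y))
| cs_one : comm_sub gone
| cs_mul : forall x y, comm_sub x -> comm_sub y -> comm_sub (gmul x y)
| cs_inv : forall x, comm_sub x -> comm_sub (ginv x).

Fixpoint npow {G : group} (g : G) (n : nat) : G :=
  match n with O => gone | S m => gmul g (npow g m) end.

Definition zpow {G : group} (g : G) (z : Z) : G :=
  match z with
  | Z0 => gone
  | Zpos p => npow g (Pos.to_nat p)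
  | Zneg p => ginv (npow g (Pos.to_nat p))
  end.

Fixpoint lin_comb {G : group} (gs : list G) (ns : list Z) : G :=
  match gs, ns with
  | g :: gs', n :: ns' => gmul (zpow g n) (lin_comb gs' ns')
  | _, _ => gone
  end.

(** the images of gs in H_1(G,Z) are Z-linearly independent *)
Definition ab_independent {G : group} (gs : list G) : Prop :=
  forall ns : list Z, length ns = length gs ->
    comm_sub (lin_comb gs ns) -> Forall (fun n => n = 0%Z) ns.

Definition is_b1 (G : group) (k : nat) : Prop :=
  (exists gs : list G, length gs = k /\ ab_independent gs) /\
  (forall gs : list G, ab_independent gs -> length gs <= k).

From Pilot Require Import Defs.
From Stdlib Require Import ZArith List Lia.
From HB Require Import structures.
From mathcomp Require Import all_boot all_algebra.
From mathcomp Require Import boolp.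
Set Implicit Arguments. Unset Strict Implicit. Unset Printing Implicit Defensive.
Import GRing.Theory.

(** The induced maps are always onto; they are injective exactly when every
    homomorphism [G -> F] (resp. every one with non-abelian image) kills
    [ker f], because such maps then factor through [f].
    (=>) Injectivity on [RF] gives it on [RF_na].  For [b_1], if the images of
    an independent family of [G^ab] satisfied a relation in [H^ab], lifting it
    would produce [z] in [ker f] of infinite order in [G^ab]; a finitely
    generated abelian group maps to [int] nontrivially on such an element, and
    [int] embeds in [F], giving a homomorphism [G -> F] that does not kill [z].
    (<=) If [b_1(G) = b_1(H)], every [z] in [ker f] has a nonzero power in
    [[G,G]], else [z] would extend a lifted maximal independent family.  A
    homomorphism [G -> F] with abelian image kills [[G,G]], hence kills [z]
    because free groups are torsion-free. *)

Lemma sig_ext (T : Type) (P : T -> Prop) (a c : sig P) :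
  proj1_sig a = proj1_sig c -> a = c.
Proof. by case: a c => a ha [c hc] /= e; apply: eq_exist. Qed.

Lemma cid_ext (T : Type) (P Q : T -> Prop) (p : exists x, P x) (q : exists x, Q x) :
  P = Q -> proj1_sig (cid p) = proj1_sig (cid q).
Proof. by move=> e; subst Q; rewrite (Prop_irrelevance p q). Qed.

Section GroupLaws.
Variable G : group.
Implicit Types x y z : G.

Lemma gmulKg x y : gmul (ginv x) (gmul x y) = y.
Proof. by rewrite gmulA gmulVl gmul1l. Qed.

Lemma gmulKVg x y : gmul x (gmul (ginv x) y) = y.
Proof. by rewrite gmulA gmulVr gmul1l. Qed.

Lemma gmulgK x y : gmul (gmul y x) (ginv x) = y.
Proof. by rewrite -gmulA gmulVr gmul1r. Qed.

Lemma gmulIg x y z : gmul x y = gmul x z -> y = z.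
Proof. by move=> h; rewrite -(gmulKg x y) h gmulKg. Qed.

Lemma gmulgI x y z : gmul y x = gmul z x -> y = z.
Proof. by move=> h; rewrite -(gmulgK x y) h gmulgK. Qed.

Lemma ginvK x : ginv (ginv x) = x.
Proof. by apply: (@gmulIg (ginv x)); rewrite gmulVr gmulVl. Qed.

Lemma ginvM x y : ginv (gmul x y) = gmul (ginv y) (ginv x).
Proof. by apply: (@gmulIg (gmul x y)); rewrite gmulVr -gmulA gmulKVg gmulVr. Qed.

Lemma ginv1 : ginv (gone : G) = gone.
Proof. by apply: (@gmulIg gone); rewrite gmulVr gmul1l. Qed.

Lemma ginv_uniq x y : gmul x y = gone -> y = ginv x.
Proof. by move=> h; apply: (@gmulIg x); rewrite h gmulVr. Qed.

Lemma ginv_eq1 x : ginv x = gone -> x = gone.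
Proof. by move=> h; rewrite -(ginvK x) h ginv1. Qed.

Lemma npowSr x n : npow x n.+1 = gmul (npow x n) x.
Proof.
elim: n => [|n IH]; first by rewrite /= gmul1r gmul1l.
by rewrite -[LHS]/(gmul x (npow x n.+1)) {1}IH gmulA.
Qed.

Lemma npow1 n : npow (gone : G) n = gone.
Proof. by elim: n => //= n ->; rewrite gmul1l. Qed.

Lemma npow_conj x y n :
  npow (gmul x (gmul y (ginv x))) n = gmul x (gmul (npow y n) (ginv x)).
Proof.
elim: n => [|n IH] /=; first by rewrite gmul1l gmulVr.
by rewrite IH -!gmulA gmulKg.
Qed.

Lemma zpow_succ x (m : Z) : zpow x (Z.succ m) = gmul x (zpow x m).
Proof.
case: m => [|p|p]; first by rewrite /= gmul1r.
  by rewrite /= Pos.add_1_r Pos2Nat.inj_succ.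
case: (Pos.succ_pred_or p) => [->|<-]; first by rewrite /= gmul1r gmulVr.
rewrite (_ : Z.succ (Z.neg (Pos.succ (Pos.pred p))) = Z.neg (Pos.pred p)); last by lia.
by rewrite /= Pos2Nat.inj_succ npowSr ginvM gmulKVg.
Qed.

Lemma zpow_pred x (m : Z) : zpow x (Z.pred m) = gmul (ginv x) (zpow x m).
Proof.
case: m => [|p|p]; first by rewrite /= !gmul1r.
  case: (Pos.succ_pred_or p) => [->|<-]; first by rewrite /= gmul1r gmulVl.
  rewrite (_ : Z.pred (Z.pos (Pos.succ (Pos.pred p))) = Z.pos (Pos.pred p)); last by lia.
  by rewrite /= Pos2Nat.inj_succ /= gmulKg.
by rewrite /= Pos.add_1_r Pos2Nat.inj_succ npowSr ginvM.
Qed.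

Lemma zpow_add x a c : zpow x (a + c) = gmul (zpow x a) (zpow x c).
Proof.
elim/Z.peano_ind: a => [|a IH|a IH]; first by rewrite /= gmul1l.
  by rewrite Z.add_succ_l !zpow_succ IH gmulA.
by rewrite Z.add_pred_l !zpow_pred IH gmulA.
Qed.

Lemma zpow_gone (m : Z) : zpow (gone : G) m = gone.
Proof. by case: m => [|p|p] //=; rewrite npow1 ?ginv1. Qed.

End GroupLaws.

Section Homomorphisms.
Variables (G H : group) (f : G -> H).
Hypothesis hf : is_hom f.

Lemma hom1 : f gone = gone.
Proof. by apply: (@gmulIg _ (f gone)); rewrite -hf !gmul1r. Qed.

Lemma homV x : f (ginv x) = ginv (f x).
Proof. by apply: ginv_uniq; rewrite -hf gmulVr hom1. Qed.

Lemma hom_npow x n : f (npow x n) = npow (f x) n.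
Proof. by elim: n => [|n IH] /=; [exact: hom1 | rewrite hf IH]. Qed.

Lemma hom_zpow x z : f (zpow x z) = zpow (f x) z.
Proof. by case: z => [|p|p] /=; rewrite ?hom1 ?homV ?hom_npow. Qed.

Lemma hom_lin_comb gs ns : f (lin_comb gs ns) = lin_comb (map f gs) ns.
Proof.
elim: gs ns => [|g gs IH] [|n ns] /=; rewrite ?hom1 //.
by rewrite hf hom_zpow IH.
Qed.

Lemma hom_comm_sub x : comm_sub x -> comm_sub (f x).
Proof.
elim=> [a b||a b _ IHa _ IHb|a _ IHa].
- by rewrite !hf !homV; apply: cs_comm.
- by rewrite hom1; apply: cs_one.
- by rewrite hf; apply: cs_mul.
- by rewrite homV; apply: cs_inv.
Qed.

Lemma abelian_hom_comm_sub :
  (forall a c, gmul (f a) (f c) = gmul (f c) (f a)) ->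
  forall y, comm_sub y -> f y = gone.
Proof.
move=> hab y; elim=> [x y'||a c _ ha _ hc|a _ ha].
- by rewrite !hf !homV [gmul (f x) (f y')]hab -gmulA gmulKg gmulVl.
- exact: hom1.
- by rewrite hf ha hc gmul1l.
- by rewrite homV ha ginv1.
Qed.

End Homomorphisms.

(** * The abelianization [G / [G,G]] as a [zmodType] *)

Section CommutatorCongruence.
Variable G : group.
Implicit Types x y z a b : G.

Lemma cs_conj x g : comm_sub x -> comm_sub (gmul (gmul (ginv g) x) g).
Proof.
move=> hx.
have -> : gmul (gmul (ginv g) x) g =
          gmul x (gmul (gmul (ginv x) (ginv g)) (gmul x g)).
  by rewrite gmulA [gmul x (gmul (ginv x) _)]gmulKVg gmulA.
by apply: cs_mul => //; apply: cs_comm.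
Qed.

Definition eqab x y := comm_sub (gmul (ginv x) y).

Lemma eqab_refl x : eqab x x.
Proof. by rewrite /eqab gmulVl; exact: cs_one. Qed.

Lemma eqab_sym x y : eqab x y -> eqab y x.
Proof. by rewrite /eqab => /cs_inv; rewrite ginvM ginvK. Qed.

Lemma eqab_trans x y z : eqab x y -> eqab y z -> eqab x z.
Proof. by rewrite /eqab => h1 h2; have := cs_mul h1 h2; rewrite -gmulA gmulKVg. Qed.

Lemma eqab_mul a a' b b' : eqab a a' -> eqab b b' -> eqab (gmul a b) (gmul a' b').
Proof.
rewrite /eqab => h1 h2; have := cs_mul (cs_conj b h1) h2.
by rewrite ginvM -!gmulA gmulKVg.
Qed.

Lemma eqab_inv a a' : eqab a a' -> eqab (ginv a) (ginv a').
Proof.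
rewrite /eqab => h; have := cs_conj (ginv a) (cs_inv h).
by rewrite !ginvK ginvM !ginvK -!gmulA gmulVr gmul1r.
Qed.

Lemma eqab_comm x y : eqab (gmul x y) (gmul y x).
Proof. by rewrite /eqab ginvM; apply: cs_comm. Qed.

(** A chosen representative of each congruence class. *)
Definition canon x : G := proj1_sig (cid (ex_intro (eqab x) x (eqab_refl x))).

Lemma canon_spec x : eqab x (canon x).
Proof. exact: proj2_sig (cid _). Qed.

Lemma canon_eq x y : eqab x y -> canon x = canon y.
Proof.
move=> hxy; apply: cid_ext; apply: funext => z; apply: propext.
by split; [apply: eqab_trans; apply: eqab_sym | exact: eqab_trans].
Qed.

Lemma canon_idem x : canon (canon x) = canon x.
Proof. by apply: canon_eq; apply: eqab_sym; apply: canon_spec. Qed.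

End CommutatorCongruence.

Definition Ab (G : group) := {x : G | canon x = x}.

HB.instance Definition _ G := gen_eqMixin (Ab G).
HB.instance Definition _ G := gen_choiceMixin (Ab G).

Section AbelianizationLaws.
Variable G : group.
Implicit Types x y : G.

Definition ab x : Ab G := exist _ (canon x) (canon_idem x).

Lemma ab_eq x y : eqab x y -> ab x = ab y.
Proof. by move=> h; apply: sig_ext; apply: canon_eq. Qed.

Lemma ab_inj x y : ab x = ab y -> eqab x y.
Proof.
move=> /(f_equal (@proj1_sig _ _)) /= e.
by apply: (eqab_trans (canon_spec x)); rewrite e; apply: eqab_sym; exact: canon_spec.
Qed.

Lemma ab_val (a : Ab G) : ab (proj1_sig a) = a.
Proof. by apply: sig_ext; case: a. Qed.

Definition ab_zero : Ab G := ab gone.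
Definition ab_add (a b : Ab G) : Ab G := ab (gmul (proj1_sig a) (proj1_sig b)).
Definition ab_opp (a : Ab G) : Ab G := ab (ginv (proj1_sig a)).

Lemma ab_add_ab x y : ab_add (ab x) (ab y) = ab (gmul x y).
Proof. by apply: ab_eq; apply: eqab_mul; apply: eqab_sym; apply: canon_spec. Qed.

Lemma ab_opp_ab x : ab_opp (ab x) = ab (ginv x).
Proof. by apply: ab_eq; apply: eqab_inv; apply: eqab_sym; apply: canon_spec. Qed.

Lemma ab_addA : associative ab_add.
Proof. by move=> a b c; rewrite -[a]ab_val -[b]ab_val -[c]ab_val !ab_add_ab gmulA. Qed.

Lemma ab_addC : commutative ab_add.
Proof.
by move=> a b; rewrite -[a]ab_val -[b]ab_val !ab_add_ab; apply: ab_eq; apply: eqab_comm.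
Qed.

Lemma ab_add0 : left_id ab_zero ab_add.
Proof. by move=> a; rewrite -[a]ab_val /ab_zero ab_add_ab gmul1l. Qed.

Lemma ab_addN : left_inverse ab_zero ab_opp ab_add.
Proof. by move=> a; rewrite -[a]ab_val ab_opp_ab ab_add_ab gmulVl. Qed.

End AbelianizationLaws.

HB.instance Definition _ G :=
  GRing.isZmodule.Build (Ab G) (@ab_addA G) (@ab_addC G) (@ab_add0 G) (@ab_addN G).

Local Open Scope ring_scope.

Section AbelianizationProjection.
Variable G : group.
Implicit Types x y : G.

Lemma abM x y : ab (gmul x y) = ab x + ab y.
Proof. by rewrite -ab_add_ab. Qed.

Lemma abV x : ab (ginv x) = - ab x.
Proof. by rewrite -ab_opp_ab. Qed.

Lemma ab_surj (a : Ab G) : exists x, ab x = a.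
Proof. by exists (proj1_sig a); apply: ab_val. Qed.

Lemma ab_eq0 x : ab x = 0 <-> comm_sub x.
Proof.
split; first by move=> /ab_inj; rewrite /eqab gmul1r => /cs_inv; rewrite ginvK.
by move=> h; apply: ab_eq; rewrite /eqab gmul1r; exact: cs_inv.
Qed.

Lemma ab_npow x n : ab (npow x n) = ab x *+ n.
Proof. by elim: n => [|n IH] //=; rewrite abM IH mulrS. Qed.

End AbelianizationProjection.

(** * Integer linear algebra in abelian groups *)

Definition int_of_Z (z : Z) : int :=
  match z with
  | Z0 => 0
  | Zpos p => Posz (Pos.to_nat p)
  | Zneg p => - Posz (Pos.to_nat p)
  end.

Definition Z_of_int (i : int) : Z :=
  match i with
  | Posz n => Z.of_nat n
  | Negz n => Z.opp (Z.of_nat n.+1)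
  end.

Lemma Z_of_intK i : int_of_Z (Z_of_int i) = i.
Proof.
case: i => [[|n]|n] //=; first by rewrite SuccNat2Pos.id_succ.
by rewrite SuccNat2Pos.id_succ NegzE.
Qed.

Lemma int_of_Z_eq0 z : int_of_Z z = 0 -> z = Z0.
Proof.
have pos_ne0 p : Pos.to_nat p <> 0%N by move: (Pos2Nat.is_pos p); lia.
case: z => [|p|p] //= h; first by case: h => /pos_ne0.
by move/eqP: h; rewrite oppr_eq0 => /eqP [/pos_ne0].
Qed.

Lemma Z_of_intD (m n : int) : Z_of_int (m + n) = Z.add (Z_of_int m) (Z_of_int n).
Proof.
change (m + n) with (intZmod.addz m n).
case: m => m; case: n => n; rewrite /intZmod.addz;
  try (case: ltnP => /leP h); rewrite /Z_of_int -?minusE -?plusE; lia.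
Qed.

Lemma ab_zpow (G : group) (x : G) z : ab (zpow x z) = ab x *~ int_of_Z z.
Proof.
case: z => [|p|p] /=; first by rewrite mulr0z.
  by rewrite ab_npow.
by rewrite abV ab_npow mulrNz.
Qed.

Lemma sum_bump (R : nmodType) k p (F : nat -> R) : (p < k.+1)%N ->
  \sum_(i < k.+1) F i = F p + \sum_(i < k) F (bump p i).
Proof. by move=> hp; rewrite (bigD1_ord (Ordinal hp) (P := xpredT)). Qed.

(** The
    proof eliminates the first equation using a variable [p] occurring in it. *)
Lemma homogeneous_system_solvable n : forall k (V : nat -> nat -> int), (n < k)%N ->
  exists c : nat -> int, (exists i, (i < k)%N /\ c i != 0) /\
    forall j, (j < n)%N -> \sum_(i < k) c i * V i j = 0.
Proof.
elim: n => [|n IH] k V hk.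
  by exists (fun _ => 1); split => //; exists 0%N.
case: (EM (forall i, (i < k)%N -> V i 0%N = 0)) => [h0|].
  have [c [hc hs]] := IH k (fun i j => V i j.+1) (ltnW hk).
  exists c; split => // -[|j] hj; last exact: hs.
  by rewrite big1 // => i _; rewrite h0 ?mulr0.
move=> /existsNP [p /not_implyP [hp /eqP hVp]].
case: k hk hp => [//|k] hk hp.
pose h i := V i 0%N.
pose W i j := h p * V (bump p i) j.+1 - h (bump p i) * V p j.+1.
have [d [[i0 [hi0 hd0]] hd]] := IH k W hk.
pose c i := if i == p then - \sum_(i' < k) d i' * h (bump p i')
            else d (unbump p i) * h p.
have cb i : c (bump p i) = d i * h p.
  by rewrite /c eq_sym (negbTE (neq_bump p i)) bumpK.
exists c; split.
  exists (bump p i0); split; last by rewrite cb mulf_neq0.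
  by rewrite /bump; case: (p <= i0)%N; rewrite ?add1n ?add0n ltnS // ltnW.
move=> [|j] hj.
  rewrite (sum_bump (fun i => c i * V i 0%N) hp) /= {1}/c eqxx.
  under eq_bigr => i _ do rewrite cb.
  rewrite mulNr mulr_suml -sumrN -big_split /= big1 // => i _.
  by rewrite /h -mulrA [V (bump p i) 0%N * _]mulrC mulrA addNr.
rewrite (sum_bump (fun i => c i * V i j.+1) hp) /= {1}/c eqxx.
under eq_bigr => i _ do rewrite cb.
rewrite -[RHS](hd j hj) mulNr mulr_suml -sumrN -big_split /=; apply: eq_bigr => i _.
by rewrite /W mulrBr addrC !mulrA.
Qed.

Section Independence.
Variable A : zmodType.

Definition comb k (x : nat -> A) (c : nat -> int) : A := \sum_(i < k) x i *~ c i.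

Definition indep k (x : nat -> A) :=
  forall c, comb k x c = 0 -> forall i, (i < k)%N -> c i = 0.

Definition spans n (e : nat -> A) := forall y, exists v, y = comb n e v.

Lemma combD k x c c' : comb k x c + comb k x c' = comb k x (fun i => c i + c' i).
Proof. by rewrite /comb -big_split /=; apply: eq_bigr => i _; rewrite mulrzDr. Qed.

Lemma combZ k x c t : comb k x c *~ t = comb k x (fun i => c i * t).
Proof. by rewrite /comb mulrz_suml; apply: eq_bigr => i _; rewrite mulrzA. Qed.

Lemma combN k x c : - comb k x c = comb k x (fun i => - c i).
Proof. by rewrite /comb -sumrN; apply: eq_bigr => i _; rewrite mulrNz. Qed.

Lemma comb0 k x : comb k x (fun _ => 0) = 0.
Proof. by rewrite /comb big1 // => i _; rewrite mulr0z. Qed.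

(** An independent family is no larger than a spanning one: expressing the
    independent family in the spanning one gives a homogeneous system. *)
Lemma indep_size_le n e k x : spans n e -> indep k x -> (k <= n)%N.
Proof.
move=> hg hi; rewrite leqNgt; apply/negP => hnk.
have [V hV] := choice (fun i => hg (x i)).
have [c [[i [hik hc]] hs]] := homogeneous_system_solvable V hnk.
suff : comb k x c = 0 by move/hi => /(_ i hik) /eqP; rewrite (negbTE hc).
rewrite /comb; under eq_bigr => i' _ do rewrite hV /comb mulrz_suml.
rewrite exchange_big /= big1 // => j _.
rewrite -[RHS](mulr0z (e j)) -(hs j (ltn_ord j)) mulrz_sumr.
by apply: eq_bigr => i' _; rewrite -mulrzA mulrC.
Qed.

Definition extend k (x : nat -> A) (y : A) (i : nat) : A := if i == k then y else x i.

Lemma multiple_in_span k x y : indep k x -> ~ indep k.+1 (extend k x y) ->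
  exists m, m != 0 /\ exists c, y *~ m = comb k x c.
Proof.
move=> hxi hnot; apply: contrapT => hno; apply: hnot => c hc.
have hsplit : comb k.+1 (extend k x y) c = comb k x c + y *~ c k.
  rewrite /comb big_ord_recr /= /extend eqxx; congr (_ + _).
  by apply: eq_bigr => i _; rewrite ltn_eqF.
have hck : c k = 0.
  apply: contrapT => /eqP hm; apply: hno; exists (c k); split => //.
  exists (fun i => - c i); rewrite -combN; apply/eqP; rewrite -addr_eq0.
  by rewrite addrC -hsplit hc.
have hcx : comb k x c = 0.
  by rewrite -[LHS]addr0 -[X in _ + X](mulr0z y) -hck -hsplit.
move=> i; rewrite ltnS leq_eqVlt => /orP [/eqP -> //|hi].
exact: hxi hcx i hi.
Qed.

Lemma common_multiple_in_span n e k x : spans n e ->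
  (forall y, exists m, m != 0 /\ exists c, y *~ m = comb k x c) ->
  exists M, M != 0 /\ forall y, exists c, y *~ M = comb k x c.
Proof.
move=> hg hy.
have [M [hM0 hMj]] : exists M, M != 0 /\
    forall j, (j < n)%N -> exists c, e j *~ M = comb k x c.
  elim: n {hg} => [|n' [M [hM0 hMj]]]; first by exists 1.
  have [m [hm0 [c hc]]] := hy (e n').
  exists (M * m); split; first by rewrite mulf_neq0.
  move=> j; rewrite ltnS leq_eqVlt => /orP [/eqP ->|hj].
    by exists (fun i => c i * M); rewrite mulrC mulrzA hc combZ.
  have [c' hc'] := hMj j hj; exists (fun i => c' i * m); by rewrite mulrzA hc' combZ.
exists M; split => // y; have [v ->] := hg y.
rewrite /comb mulrz_suml; elim/big_ind: _.
- by exists (fun _ => 0); rewrite -[LHS](comb0 k x).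
- by move=> y1 y2 [c1 ->] [c2 ->]; exists (fun i => c1 i + c2 i); apply: combD.
- move=> j _; have [c hc] := hMj j (ltn_ord j).
  by exists (fun i => c i * v j); rewrite -mulrzA mulrC mulrzA hc combZ.
Qed.

(** Over an independent family spanning [A] up to the multiplier [M], the
    first coordinate of [M y] is an additive functional, nonzero on [x 0]. *)
Lemma coordinate_functional k x M : (0 < k)%N -> indep k x -> M != 0 ->
  (forall y, exists c, y *~ M = comb k x c) ->
  exists phi : A -> int, (forall y z, phi (y + z) = phi y + phi z) /\ phi (x 0%N) != 0.
Proof.
move=> hk hxi hM0 hspan.
have [coord hcoord] := choice hspan.
have coord0 c c' : comb k x c = comb k x c' -> c 0%N = c' 0%N.
  move=> h; apply/eqP; rewrite -subr_eq0; apply/eqP.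
  by apply: (hxi (fun i => c i - c' i)) => //; rewrite -combD -combN h addrN.
exists (fun y => coord y 0%N); split.
  move=> y z; apply: (coord0 _ (fun i => coord y i + coord z i)).
  by rewrite -combD -!hcoord mulrzDl.
rewrite (@coord0 _ (fun i => if i == 0%N then M else 0)) // -hcoord.
case: k hk {hxi hspan hcoord coord0} => [//|k] _.
by rewrite /comb big_ord_recl /= big1 ?addr0.
Qed.

End Independence.

Lemma bounded_max (P : nat -> Prop) N : P 0%N -> (forall k, P k -> (k <= N)%N) ->
  exists k, P k /\ forall k', P k' -> (k' <= k)%N.
Proof.
move=> h0 hb; apply: contrapT => hno.
have step k : P k -> exists k', P k' /\ (k < k')%N.
  move=> hk; apply: contrapT => hn; apply: hno; exists k; split => // k' hk'.
  by rewrite leqNgt; apply/negP => hlt; apply: hn; exists k'.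
have : forall m, exists k, P k /\ (m <= k)%N.
  elim=> [|m [k [hk hmk]]]; first by exists 0%N.
  have [k' [hk' hkk']] := step k hk; exists k'; split => //.
  exact: leq_ltn_trans hmk hkk'.
move=> /(_ N.+1) [k [hk hNk]]; have := hb k hk.
by rewrite leqNgt (leq_trans (ltnSn N) hNk).
Qed.

(** In a finitely generated abelian group, every element of infinite order is
    detected by an additive map to [int]: extend it to a maximal independent
    family and take the first coordinate. *)
Lemma infinite_order_functional (A : zmodType) n (e : nat -> A) (a : A) :
  spans n e -> (forall m, a *~ m = 0 -> m = 0) ->
  exists phi : A -> int, (forall y z, phi (y + z) = phi y + phi z) /\ phi a != 0.
Proof.
move=> hg ha.
pose P k := exists x : nat -> A, x 0%N = a /\ indep k.+1 x.
have P0 : P 0%N.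
  exists (fun _ => a); split => // c; rewrite /comb big_ord1 => /ha h0 i.
  by rewrite ltnS leqn0 => /eqP ->.
have Pbound k : P k -> (k <= n)%N.
  by move=> [x [_ hi]]; exact: ltnW (indep_size_le hg hi).
have [k [[x [hx0 hxi]] hmax]] := bounded_max P0 Pbound.
have hy y : exists m, m != 0 /\ exists c, y *~ m = comb k.+1 x c.
  apply: multiple_in_span hxi _ => hi.
  have : P k.+1 by exists (extend k.+1 x y).
  by move/hmax; rewrite ltnn.
have [M [hM0 hspan]] := common_multiple_in_span hg hy.
by rewrite -hx0; exact: coordinate_functional hxi hM0 hspan.
Qed.

(** * Free groups *)

Section Subgroup.
Variables (G : group) (P : G -> Prop).
Hypothesis P1 : P gone.
Hypothesis PM : forall x y, P x -> P y -> P (gmul x y).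
Hypothesis PV : forall x, P x -> P (ginv x).

Definition subgroup_carrier := {g : G | P g}.

Definition subgroup : group.
Proof.
refine (@Defs.Group subgroup_carrier
  (fun a c => exist _ _ (PM (proj2_sig a) (proj2_sig c))) (exist _ _ P1)
  (fun a => exist _ _ (PV (proj2_sig a))) _ _ _ _ _) => *; apply: sig_ext => /=.
- exact: gmulA. - exact: gmul1l. - exact: gmul1r. - exact: gmulVl. - exact: gmulVr.
Defined.

End Subgroup.

Lemma free_induction (F : group) (X : Type) (b : X -> F) (P : F -> Prop) :
  free_on b -> P gone -> (forall x y, P x -> P y -> P (gmul x y)) ->
  (forall x, P x -> P (ginv x)) -> (forall x, P (b x)) -> forall g, P g.
Proof.
move=> hfree P1 PM PV Pb g.
have [phi [hphi [hb _]]] :=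
  hfree (subgroup P1 PM PV) (fun x => exist _ (b x) (Pb x) : subgroup_carrier P).
have [phi0 [_ [_ huniq]]] := hfree F b.
have incl : is_hom (fun g => proj1_sig (phi g : subgroup_carrier P)).
  by move=> x y; rewrite hphi.
have e1 := huniq _ incl (fun x => f_equal (@proj1_sig _ _) (hb x)) g.
have e2 := huniq id (fun x y => erefl) (fun x => erefl) g.
have <- : proj1_sig (phi g : subgroup_carrier P) = g by rewrite e1 -e2.
exact: proj2_sig (phi g : subgroup_carrier P).
Qed.

Section PermGroup.
Variable T : Type.

Record bijection := Bijection { pf : T -> T; pb : T -> T;
  pfb : forall w, pf (pb w) = w; pbf : forall w, pb (pf w) = w }.

Lemma bijection_ext (p q : bijection) : (forall w, pf p w = pf q w) -> p = q.
Proof.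
move=> h; have hb w : pb p w = pb q w by rewrite -{2}(pfb p w) h pbf.
case: p q h hb => [f1 b1 fb1 bf1] [f2 b2 fb2 bf2] /= /funext ef /funext eb.
subst f2 b2; by rewrite (Prop_irrelevance fb1 fb2) (Prop_irrelevance bf1 bf2).
Qed.

Definition bijection_mul (p q : bijection) : bijection.
Proof.
refine (@Bijection (fun w => pf p (pf q w)) (fun w => pb q (pb p w)) _ _) => w.
- by rewrite !pfb.
- by rewrite !pbf.
Defined.

Definition bijection_group : group.
Proof.
refine (@Defs.Group bijection bijection_mul
  (@Bijection id id (fun _ => erefl) (fun _ => erefl))
  (fun p => @Bijection (pb p) (pf p) (pbf p) (pfb p)) _ _ _ _ _) => *;
  apply: bijection_ext => w //=.
- by rewrite pbf.
- by rewrite pfb.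
Defined.

End PermGroup.

(** Words over [X] with letters [x^(+1)] ([(x, false)]) and [x^(-1)]
    ([(x, true)]), and freely reduced words. *)
Section Words.
Variable X : Type.

Definition letter := (X * bool)%type.
Definition linv (l : letter) : letter := (l.1, ~~ l.2).

Lemma linvK l : linv (linv l) = l. Proof. by case: l => x []. Qed.
Lemma linv_neq l : linv l <> l. Proof. by case: l => x [] []. Qed.

Fixpoint reduced (w : seq letter) : Prop :=
  if w is l1 :: w' then
    (if w' is l2 :: _ then l2 <> linv l1 /\ reduced w' else True)
  else True.

Lemma reduced_cons l w :
  reduced (l :: w) <-> reduced w /\ (forall l2 w2, w = l2 :: w2 -> l2 <> linv l).
Proof.
case: w => [|l2 w2] /=; first by split => // _; split => // ? ?.
by split=> [[h1 h2]|[h1 h2]]; [split => // l3 w3 [<- _] | split => //; exact: h2].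
Qed.

Definition olast (a : seq letter) : option letter :=
  if a is x :: s then Some (last x s) else None.
Definition junc (a c : seq letter) :=
  forall l1 l2, olast a = Some l1 -> ohead c = Some l2 -> l2 <> linv l1.

Lemma reduced_cat a c : reduced (a ++ c) <-> [/\ reduced a, reduced c & junc a c].
Proof.
elim: a => [|l a IH].
  by rewrite cat0s; split; [move=> h; split => // ? ? [] | case].
rewrite cat_cons reduced_cons IH; split.
- move=> [[ha hc hj] hl]; split => //.
  + apply/reduced_cons; split => // l2 w2 e; apply: (hl l2 (w2 ++ c)); by rewrite e.
  + move=> l1 l2 /= [<-] hc2.
    case: a hl hj {ha IH} => [|l3 a] hl hj /=; last exact: hj.
    by case: c hc2 hl {hc hj} => // l4 c [<-] hl; apply: hl.
- case=> /reduced_cons [ha hl] hc hj; split; first split => //.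
  + move=> l1 l2 ha1 hc2; apply: hj => //.
    by case: a ha1 {ha hl IH} => // l3 a [<-].
  + move=> l2 w2; case: a hl hj {ha IH} => [|l3 a] hl hj /=.
      by case: c hc hj => // l4 c _ hj [<- _]; apply: hj.
    by move=> [<- _]; apply: hl.
Qed.

Definition push (l : letter) (w : seq letter) : seq letter :=
  if w is l' :: w' then (if `[< l' = linv l >] then w' else l :: w) else [:: l].

Lemma push_red l w : reduced w -> reduced (push l w).
Proof.
case: w => [|l' w] //= hw; case: asboolP => [_|hn]; last by split.
by move/reduced_cons: hw => [].
Qed.

Lemma push_inv l w : reduced w -> push (linv l) (push l w) = w.
Proof.
case: w => [|l' w] /= hw.
  by case: asboolP => // hn2; exfalso; apply: hn2; rewrite linvK.
case: asboolP => [e|hn]; last by rewrite /=; case: asboolP => // []; rewrite linvK.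
case: w hw => [|l'' w] /= hw; first by rewrite -e.
case: asboolP => [e2|_]; last by rewrite e.
by exfalso; move: hw => [h _]; apply: h; rewrite e2 -e.
Qed.

Definition reduced_word := {w : seq letter | reduced w}.

Definition push_rw (l : letter) (w : reduced_word) : reduced_word :=
  exist _ _ (push_red l (proj2_sig w)).

Lemma push_rwK l w : push_rw (linv l) (push_rw l w) = w.
Proof. by apply: sig_ext; rewrite /= push_inv //; exact: proj2_sig w. Qed.

Definition push_bij (l : letter) : bijection reduced_word.
Proof.
refine (@Bijection _ (push_rw l) (push_rw (linv l)) _ _) => w; last exact: push_rwK.
by rewrite -{1}(linvK l) push_rwK.
Defined.

Definition winv (a : seq letter) := rev (map linv a).
Fixpoint wpow (c : seq letter) m := if m is m'.+1 then c ++ wpow c m' else [::].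

(** Every nonempty reduced word is a conjugate [a c a^-1] of a nonempty
    cyclically reduced word [c] (one for which [c c] is reduced); by induction
    on the length, peeling off a first and last letter that cancel. *)
Lemma cyclic_reduction w : reduced w -> w <> [::] ->
  exists a c, w = a ++ c ++ winv a /\ c <> [::] /\ reduced (c ++ c).
Proof.
elim: {w}(size w).+1 {-2}w (ltnSn (size w)) => [|n IH] w //= hs hw hne.
case: (EM (junc w w)) => hj.
  exists [::], w; split; first by rewrite /= /winv /= cats0.
  by split => //; apply/reduced_cat.
have [l1 [l2 [hl1 [hl2 e]]]] :
    exists l1 l2, olast w = Some l1 /\ ohead w = Some l2 /\ l2 = linv l1.
  apply: contrapT => hno; apply: hj => l1 l2 h1 h2 e.
  by apply: hno; exists l1, l2.
case: w hs hw hne hl1 hl2 {hj} => [|l w] // hs hw _ hl1 [e2]; subst l.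
case/lastP: w hs hw hl1 => [|w' l1'] hs hw hl1.
  by move: hl1 => /= [e1]; exfalso; have := @linv_neq l1; rewrite -e e1; apply.
move: hl1; rewrite /= last_rcons => -[e1]; subst l1'.
have hw' : reduced w'.
  by move/reduced_cons: hw => [+ _]; rewrite -cats1 => /reduced_cat [].
case: w' hs hw hw' => [|l3 w'] hs hw hw'.
  by exfalso; move: hw => /= [h _]; apply: h; rewrite e linvK.
have hs' : (size (l3 :: w') < n)%N by move: hs; rewrite /= size_rcons !ltnS => /ltnW.
have [a [c [ew [hc hcc]]]] := IH (l3 :: w') hs' hw' (fun h => ltac:(discriminate)).
exists (linv l1 :: a), c; split => //.
by rewrite ew /winv /= rev_cons linvK -rcons_cat -rcons_cat e.
Qed.

Lemma wpow_reduced c m : c <> [::] -> reduced (c ++ c) -> reduced (wpow c m.+1).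
Proof.
move=> hc hcc; move/reduced_cat: (hcc) => [hr _ hj].
elim: m => [|m IH] /=; first by rewrite cats0.
apply/reduced_cat; split => // l1 l2 h1 h2; apply: hj h1 _.
by case: c hc {hr hcc IH} h2 => [//|l c] _.
Qed.

End Words.

Definition int_group : group.
Proof.
refine (@Defs.Group int (fun a c => a + c) 0 (fun a => - a) _ _ _ _ _) => *.
- exact: addrA. - exact: add0r. - exact: addr0. - exact: addNr. - exact: addrN.
Defined.

Section FreeGroup.
Variables (F : group) (X : Type) (b : X -> F).
Hypothesis hfree : free_on b.

Definition action_spec := cid (hfree (K := bijection_group (reduced_word X))
  (fun x => push_bij (x, false))).
Definition act : F -> bijection_group (reduced_word X) := proj1_sig action_spec.

Lemma act_hom : is_hom act. Proof. by have [h _] := proj2_sig action_spec. Qed.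
Lemma act_b x : act (b x) = push_bij (x, false).
Proof. by have [_ [h _]] := proj2_sig action_spec. Qed.

Definition eval_letter (l : letter X) : F := if l.2 then ginv (b l.1) else b l.1.
Definition eval (w : seq (letter X)) : F :=
  foldr (fun l g => gmul (eval_letter l) g) gone w.

Lemma eval_letter_linv l : eval_letter (linv l) = ginv (eval_letter l).
Proof. by case: l => x [] /=; rewrite ?ginvK. Qed.

Lemma eval_push l w : eval (push l w) = gmul (eval_letter l) (eval w).
Proof.
case: w => [|l' w] //=; case: asboolP => [e|_] //.
by rewrite e eval_letter_linv gmulKVg.
Qed.

Lemma eval_cat a c : eval (a ++ c) = gmul (eval a) (eval c).
Proof. by elim: a => [|l a IH] /=; rewrite ?gmul1l // IH gmulA. Qed.

Lemma eval_winv a : eval (winv a) = ginv (eval a).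
Proof.
elim: a => [|l a IH]; first by rewrite /= ginv1.
rewrite /winv /= rev_cons -cats1 eval_cat -/(winv a) IH /= eval_letter_linv gmul1r.
by rewrite -ginvM.
Qed.

Lemma eval_wpow c m : eval (wpow c m) = npow (eval c) m.
Proof. by elim: m => [|m IH] //=; rewrite eval_cat IH. Qed.

Lemma eval_act g w : eval (proj1_sig (pf (act g) w)) = gmul g (eval (proj1_sig w)).
Proof.
move: g w; apply: (free_induction
  (P := fun g => forall w, eval (proj1_sig (pf (act g) w)) = gmul g (eval (proj1_sig w)))
  hfree) => [|g1 h1 hg hh|g1 hg|x] w.
- by rewrite (hom1 act_hom) gmul1l.
- by rewrite act_hom /= hg hh gmulA.
- rewrite (homV act_hom) /=; apply: (@gmulIg _ g1); rewrite gmulKVg -hg.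
  by rewrite (pfb (act g1)).
- by rewrite act_b /= eval_push.
Qed.

Lemma act_eval v : reduced v -> proj1_sig (pf (act (eval v)) (exist _ [::] I)) = v.
Proof.
elim: v => [|l v IH] hv /=; first by rewrite (hom1 act_hom).
have act_letter : pf (act (eval_letter l)) = pf (push_bij l).
  by case: l {hv} => x [] /=; rewrite ?(homV act_hom) act_b.
rewrite act_hom /= act_letter /= IH; last by move/reduced_cons: hv => [].
by case: v hv {IH} => [|l' v] //= [hl _]; case: asboolP.
Qed.

Lemma free_torsionfree (u : F) n : npow u n.+1 = gone -> u = gone.
Proof.
move=> hu; pose w := proj1_sig (pf (act u) (exist _ [::] I)).
have hw : reduced w by exact: proj2_sig (pf (act u) _).
have hpw : eval w = u by rewrite /w eval_act /= gmul1r.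
case: (EM (w = [::])) => [e|hne]; first by rewrite -hpw e.
have [a [c [ew [hc hcc]]]] := cyclic_reduction hw hne.
have hc1 : npow (eval c) n.+1 = gone.
  move: hu; rewrite -hpw ew !eval_cat eval_winv npow_conj => hu.
  apply: (@gmulIg _ (eval a)); apply: (@gmulgI _ (ginv (eval a))).
  by rewrite gmul1r gmulVr -gmulA.
have := act_eval (wpow_reduced n hc hcc).
by rewrite eval_wpow hc1 (hom1 act_hom); case: c hc {hcc hc1 ew}.
Qed.

(** A basis element of a free group has infinite order: send every basis
    element to [1] in [int]. *)
Lemma basis_zpow_eq1 x0 (m : Z) : zpow (b x0) m = gone -> m = Z0.
Proof.
have [chi [hchi [hb _]]] := hfree (K := int_group) (fun _ => 1%R).
have npow_one n : npow (1%R : int_group) n = Posz n.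
  by elim: n => [|n IH] //=; rewrite IH intS.
move=> /(f_equal chi); rewrite (hom_zpow hchi) hb (hom1 hchi).
case: m => [|p|p] //= h; exfalso; have := Pos2Nat.is_pos p.
- by move: h; rewrite npow_one => -[->]; lia.
- by move: h; rewrite npow_one => /eqP; rewrite oppr_eq0 => /eqP [->]; lia.
Qed.

End FreeGroup.

Lemma nonabelian_free_basis (F : group) :
  nonabelian_free F -> exists (X : Type) (b : X -> F), free_on b /\ inhabited X.
Proof.
move=> [[X [b hfree]] [x1 [y1 hxy]]]; exists X, b; split => //.
apply: contrapT => hno; apply: hxy.
have all1 : forall g : F, g = gone.
  apply: (free_induction (P := fun g => g = gone) hfree) => //.
  - by move=> ? ? -> ->; rewrite gmul1l.
  - by move=> ? ->; rewrite ginv1.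
  - by move=> x; exfalso; apply: hno; constructor.
by rewrite (all1 x1) (all1 y1).
Qed.

(** * First Betti numbers *)

Lemma length_size (T : Type) (l : seq T) : length l = size l.
Proof. by elim: l => //= x l ->. Qed.

Lemma lin_comb_cat (G : group) (gs1 gs2 : seq G) ns1 ns2 : size gs1 = size ns1 ->
  lin_comb (gs1 ++ gs2) (ns1 ++ ns2) = gmul (lin_comb gs1 ns1) (lin_comb gs2 ns2).
Proof.
elim: gs1 ns1 => [|g gs1 IH] [|m ns1] //= e; first by rewrite gmul1l.
by rewrite IH ?gmulA //; case: e.
Qed.

Lemma lin_comb_zero (G : group) (gs : seq G) ns :
  Forall (fun n => n = Z0) ns -> lin_comb gs ns = gone.
Proof.
elim: gs ns => [|g gs IH] [|m ns] //= h.
by inversion h; subst; rewrite IH // gmul1l.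
Qed.

Section AbelianFamilies.
Variable G : group.

Definition ab_family (gs : seq G) (i : nat) : Ab G := ab (nth gone gs i).
Definition coeffs (ns : seq Z) (i : nat) : int := int_of_Z (nth Z0 ns i).

Lemma ab_lin_comb (gs : seq G) ns : length ns = length gs ->
  ab (lin_comb gs ns) = comb (size gs) (ab_family gs) (coeffs ns).
Proof.
elim: gs ns => [|g gs IH] [|m ns] //= e; first by rewrite /comb big_ord0.
by rewrite abM ab_zpow IH; [rewrite /comb big_ord_recl | case: e].
Qed.

Lemma all_zero_coeffs (ns : seq Z) :
  (forall i, (i < size ns)%N -> coeffs ns i = 0) -> Forall (fun n => n = Z0) ns.
Proof.
elim: ns => [|m ns IH] h; constructor; first exact: int_of_Z_eq0 (h 0%N _).
by apply: IH => i hi; exact: (h i.+1).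
Qed.

Lemma coeffs_all_zero (ns : seq Z) i : Forall (fun n => n = Z0) ns -> coeffs ns i = 0.
Proof.
elim: ns i => [|m ns IH] i h; first by rewrite /coeffs nth_nil.
by inversion h; subst; case: i => [|i] //; exact: IH.
Qed.

Lemma ab_independent_indep (gs : seq G) :
  ab_independent gs -> indep (size gs) (ab_family gs).
Proof.
move=> h c hc i hi.
pose ns := map (fun j => Z_of_int (c j)) (iota 0 (size gs)).
have hl : length ns = length gs by rewrite !length_size size_map size_iota.
have hcs j : (j < size gs)%N -> coeffs ns j = c j.
  by move=> hj; rewrite /coeffs (nth_map 0%N) ?size_iota // nth_iota // add0n Z_of_intK.
have : comm_sub (lin_comb gs ns).
  apply/ab_eq0; rewrite ab_lin_comb // -hc /comb; apply: eq_bigr => j _.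
  by rewrite hcs.
by move/(h ns hl)/(coeffs_all_zero i); rewrite hcs.
Qed.

Lemma lin_comb_infinite_order (gs : seq G) ns :
  ab_independent gs -> length ns = length gs -> ~ Forall (fun n => n = Z0) ns ->
  forall m, ab (lin_comb gs ns) *~ m = 0 -> m = 0.
Proof.
move=> hind hl hnz m; rewrite ab_lin_comb // combZ => /(ab_independent_indep hind) h0.
apply/eqP; apply: contraT => hm; apply/negP => _; apply: hnz.
apply: all_zero_coeffs => i hi; apply/eqP.
have := h0 i; rewrite -length_size -hl length_size => /(_ hi) /eqP.
by rewrite mulf_eq0 (negbTE hm) orbF.
Qed.

Lemma generators_span (S : seq G) :
  (forall x, generated S x) -> spans (size S) (ab_family S).
Proof.
move=> hS y; have [g <-] := ab_surj y.
elim: (hS g) => [x hx||x1 x2 _ [v1 e1] _ [v2 e2]|x _ [v e]].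
- have [j [hj e]] := In_nth _ _ gone hx.
  rewrite length_size in hj; move/ltP: hj => hj.
  exists (fun i => if i == j then 1 else 0).
  rewrite /comb (bigD1 (Ordinal hj)) //= eqxx mulr1z big1 ?addr0.
    by rewrite /ab_family -e; elim: S {hS hx hj e} j => [|s S IH] [|j] //=.
  move=> i hi; rewrite ifF ?mulr0z //; apply: contraNF hi => /eqP hij.
  by apply/eqP; apply: val_inj.
- by exists (fun _ => 0); rewrite comb0.
- by rewrite abM e1 e2; exists (fun i => v1 i + v2 i); rewrite combD.
- by rewrite abV e; exists (fun i => - v i); rewrite combN.
Qed.

End AbelianFamilies.

(** Finitely generated groups have a first Betti number: independent families
    are bounded by the number of generators. *)
Lemma b1_exists (G : group) : fin_gen G -> exists k, is_b1 G k.
Proof.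
move=> [S hS].
pose P k := exists gs : seq G, length gs = k /\ ab_independent gs.
have P0 : P 0%N by exists [::]; split => // -[|n ns] //= _ _; constructor.
have Pbound k : P k -> (k <= size S)%N.
  move=> [gs [<- hi]]; rewrite length_size.
  exact: indep_size_le (generators_span hS) (ab_independent_indep hi).
have [k [hk hmax]] := bounded_max P0 Pbound.
by exists k; split => // gs hi; apply/leP; apply: hmax; exists gs.
Qed.

(** In a finitely generated group, an element of infinite order modulo the
    commutator subgroup is not killed by every homomorphism to a free group
    with nonempty basis: map [G^ab] to [int], then [int] onto a basis cycle. *)
Lemma separating_hom (F : group) (X : Type) (b : X -> F) (x0 : X) (G : group) (z : G) :
  free_on b -> fin_gen G -> (forall m : int, ab z *~ m = 0 -> m = 0) ->
  exists th : G -> F, is_hom th /\ th z <> gone.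
Proof.
move=> hfree [S hS] ha.
have [phi [hphi hphia]] := infinite_order_functional (generators_span hS) ha.
exists (fun g => zpow (b x0) (Z_of_int (phi (ab g)))); split.
  by move=> g h; rewrite abM hphi Z_of_intD zpow_add.
move/(basis_zpow_eq1 hfree) => /(f_equal int_of_Z); rewrite Z_of_intK => /eqP.
by rewrite (negbTE hphia).
Qed.

(** * Epimorphisms, their kernels, and the induced maps on [RF] and [RF_na] *)

Section Epimorphism.
Variables (G H : group) (f : G -> H).
Hypothesis hf : is_hom f.
Hypothesis hs : surjective f.

Lemma comm_sub_lift y : comm_sub y -> exists c, comm_sub c /\ f c = y.
Proof.
elim=> [x y'||a c _ [a' [ha ea]] _ [c' [hc ec]]|a _ [a' [ha ea]]].
- have [x1 <-] := hs x; have [y1 <-] := hs y'.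
  exists (gmul (gmul (ginv x1) (ginv y1)) (gmul x1 y1)); split; first exact: cs_comm.
  by rewrite !hf !(homV hf).
- by exists gone; split; [exact: cs_one | exact: hom1].
- by exists (gmul a' c'); split; [exact: cs_mul | rewrite hf ea ec].
- by exists (ginv a'); split; [exact: cs_inv | rewrite (homV hf) ea].
Qed.

Lemma list_lift (hl : seq H) : exists gl : seq G, map f gl = hl.
Proof.
elim: hl => [|h hl [gl e]]; first by exists [::].
by have [g <-] := hs h; exists (g :: gl); rewrite /= e.
Qed.

Lemma factor_through (K : group) (phi : G -> K) : is_hom phi ->
  (forall z, f z = gone -> phi z = gone) ->
  exists phi' : H -> K, is_hom phi' /\ forall g, phi' (f g) = phi g.
Proof.
move=> hphi hker.
have heq a c : f a = f c -> phi a = phi c.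
  move=> e; have : phi (gmul (ginv c) a) = gone.
    by apply: hker; rewrite hf (homV hf) e gmulVl.
  by rewrite hphi (homV hphi) => h; apply: (@gmulIg _ (ginv (phi c))); rewrite h gmulVl.
have [sec hsec] := choice hs.
exists (fun h => phi (sec h)); split.
  by move=> h1 h2; rewrite -hphi; apply: heq; rewrite hf !hsec.
by move=> g; apply: heq; rewrite hsec.
Qed.

Lemma indep_lift (gs : seq G) : ab_independent (map f gs) -> ab_independent gs.
Proof.
move=> hind ns hl hc; apply: hind; first by rewrite hl !length_size size_map.
by rewrite -(hom_lin_comb hf); exact: (hom_comm_sub hf hc).
Qed.

Variable F : group.

Definition kernel_invisible :=
  forall z, f z = gone -> forall phi : G -> F, is_hom phi -> phi z = gone.

Lemma RF_iso_invisible : fRF_iso F f -> kernel_invisible.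
Proof.
move=> [hinj _] z hz phi hphi.
have : RF_rel F G z gone by apply: hinj => psi hpsi; rewrite hz (hom1 hf).
by move/(_ phi hphi); rewrite (hom1 hphi).
Qed.

Lemma invisible_RF_iso : kernel_invisible -> fRF_iso F f.
Proof.
move=> hinv; split; last by move=> h; have [g <-] := hs h; exists g.
move=> x y hxy phi hphi.
have [phi' [hphi' e]] := factor_through hphi (fun z hz => hinv z hz phi hphi).
by rewrite -!e; exact: hxy phi' hphi'.
Qed.

Lemma invisible_na_iso : kernel_invisible -> fna_iso F f.
Proof.
move=> hinv; split; last by move=> h; have [g <-] := hs h; exists g.
move=> x y hxy phi hphi [a [c hna]].
have [phi' [hphi' e]] := factor_through hphi (fun z hz => hinv z hz phi hphi).
rewrite -!e; apply: hxy => //; by exists (f a), (f c); rewrite !e.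
Qed.

Lemma na_iso_kills_kernel z (phi : G -> F) : fna_iso F f -> f z = gone ->
  is_hom phi -> nonabelian_image phi -> phi z = gone.
Proof.
move=> [hinj _] hz hphi hnab.
have : RFna_rel F G z gone by apply: hinj => psi hpsi _; rewrite hz (hom1 hf).
by move/(_ phi hphi hnab); rewrite (hom1 hphi).
Qed.

Variables (X : Type) (b : X -> F) (x0 : X).
Hypothesis hfree : free_on b.
Hypothesis hG : fin_gen G.

(** If [ker f] is invisible to [F], independence in [G^ab] passes to [H^ab]:
    a relation in [H^ab] would give an element of [ker f] of infinite order
    in [G^ab], which some homomorphism [G -> F] detects. *)
Lemma indep_push (gs : seq G) :
  kernel_invisible -> ab_independent gs -> ab_independent (map f gs).
Proof.
move=> hinv hind ns hl hc; apply: contrapT => hnz.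
have hl' : length ns = length gs by rewrite hl !length_size size_map.
rewrite -(hom_lin_comb hf) in hc; have [c [hc1 hc2]] := comm_sub_lift hc.
pose z := gmul (ginv c) (lin_comb gs ns).
have hfz : f z = gone by rewrite /z hf (homV hf) hc2 gmulVl.
have hnt m : (ab z *~ m = 0)%R -> m = 0%R.
  rewrite /z abM abV (proj2 (ab_eq0 c) hc1) oppr0 add0r.
  exact: lin_comb_infinite_order hind hl' hnz m.
have [th [hth hthz]] := separating_hom x0 hfree hG hnt.
exact: hthz (hinv z hfz th hth).
Qed.

Lemma b1_transfer k : kernel_invisible -> is_b1 G k -> is_b1 H k.
Proof.
move=> hinv [[gs [hlen hind]] hmax]; split.
  exists (map f gs); split; last exact: indep_push.
  by rewrite length_size size_map -length_size.
move=> hs' hind'; have [gs' e] := list_lift hs'.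
rewrite -e in hind' *; rewrite length_size size_map -length_size.
exact/hmax/indep_lift.
Qed.

(** Conversely, if [b_1(G) = b_1(H)] then [ker f] is torsion modulo the
    commutator subgroup: otherwise an element of [ker f] would extend a lift
    of a maximal independent family of [H^ab]. *)
Lemma kernel_torsion_mod_comm k z : is_b1 G k -> is_b1 H k -> f z = gone ->
  exists m, m <> Z0 /\ comm_sub (zpow z m).
Proof.
move=> [_ hmaxG] [[hs' [hlen hind]] _] hz; apply: contrapT => hno.
have [gs e] := list_lift hs'.
have hsz : size gs = k by rewrite -hlen -e length_size size_map.
suff /hmaxG : ab_independent (gs ++ [:: z]).
  by rewrite length_size size_cat hsz addn1 => /leP; rewrite ltnn.
move=> ns hl hc.
have : size ns = k.+1 by rewrite -length_size hl length_size size_cat hsz addn1.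
case/lastP: ns hl hc => [//|ns1 m] hl hc; rewrite size_rcons => -[hns].
rewrite -cats1 lin_comb_cat ?hsz // in hc.
have hns1 : Forall (fun n => n = Z0) ns1.
  apply: hind; first by rewrite hlen length_size.
  have := hom_comm_sub hf hc.
  by rewrite hf (hom_lin_comb hf) e /= hf (hom_zpow hf) hz zpow_gone (hom1 hf) !gmul1r.
rewrite lin_comb_zero // gmul1l /= gmul1r in hc.
rewrite -cats1; apply/Forall_app; split=> //; constructor=> //.
by apply: contrapT => hm; apply: hno; exists m.
Qed.

(** With [b_1(G) = b_1(H)], homomorphisms [G -> F] with abelian image kill
    [ker f]: they kill a nonzero power of each element of it, and [F] is
    torsion-free. *)
Lemma abelian_hom_kills_kernel k z (phi : G -> F) :
  is_b1 G k -> is_b1 H k -> f z = gone -> is_hom phi -> ~ nonabelian_image phi -> phi z = gone.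
Proof.
move=> hbG hbH hz hphi hnab.
have hab a c : gmul (phi a) (phi c) = gmul (phi c) (phi a).
  by apply: contrapT => hne; apply: hnab; exists a, c.
have [m [hm hcm]] := kernel_torsion_mod_comm hbG hbH hz.
have := abelian_hom_comm_sub hphi hab hcm; rewrite (hom_zpow hphi).
have hpos p : exists n, Pos.to_nat p = n.+1.
  by exists (Pos.to_nat p).-1; move: (Pos2Nat.is_pos p); lia.
case: m hm {hcm} => [//|p|p] _ /=; have [n ->] := hpos p.
- exact: (free_torsionfree hfree).
- by move/ginv_eq1; exact: (free_torsionfree hfree).
Qed.

Lemma na_iso_invisible k : fna_iso F f -> is_b1 G k -> is_b1 H k -> kernel_invisible.
Proof.
move=> hna hbG hbH z hz phi hphi.
case: (EM (nonabelian_image phi)) => hnab.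
  exact: na_iso_kills_kernel hna hz hphi hnab.
exact: abelian_hom_kills_kernel hbG hbH hz hphi hnab.
Qed.

End Epimorphism.

Theorem mainTheorem5 :
  forall (F : group), nonabelian_free F ->
  forall (G H : group) (f : G -> H),
    fin_gen G -> fin_gen H -> is_epi f ->
    (fRF_iso F f <->
       (fna_iso F f /\ exists k : nat, is_b1 G k /\ is_b1 H k)).
Proof.
move=> F hF G H f hG _ [hf hs].
have [X [b [hfree [x0]]]] := nonabelian_free_basis hF.
split.
- move=> /(RF_iso_invisible hf) hinv; split; first exact: invisible_na_iso.
  have [k hk] := b1_exists hG.
  by exists k; split => //; exact: (b1_transfer hf hs x0 hfree hG hinv hk).
- move=> [hna [k [hbG hbH]]]; apply: invisible_RF_iso => //.
  exact: (na_iso_invisible hf hs hfree hna hbG hbH).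
Qed.
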